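(* (a) Let $G$ be a finite abelian group of order coprime to $p$ and $\bar a=(a_1,\ldots,a_t)\in(\mathcal F(G,K))^t$. Then the space $\ker(\Delta_{\bar a})=\{f\in\mathcal F(G,K): f*a_j=0\ \forall j\}$ is spanned over $K$ by the translates of the traces $\mathrm{Tr}(g^\vee)$ of the $\bar a$-harmonic characters $g^\vee\in G^\vee$. (b) Let $\Lambda$ be a lattice, $\Lambda'\subseteq\Lambda$ a sublattice of finite index coprime to $p$, and $\bar a=(a_1,\ldots,a_t)\in(\mathcal F^0(\Lambda,K))^t$. Then the kernel of $\Delta_{\bar a}$ restricted to $\mathcal F_{\Lambda'}(\Lambda,K)$ is spanned over $K$ by the translates of the traces of the $\bar a$-harmonic characters $g^\vee\in\mathrm{Char}(\Lambda,\bar K^\times)$ with $\Lambda'\subseteq\ker(g^\vee)$.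
   Context: $K=\mathrm{GF}(q)$ with $q=p^r$, $\bar K$ an algebraic closure. For an abelian group $G$, $\mathcal F(G,F)$ and $\mathcal F^0(G,F)$ denote all, resp. finitely supported, functions $G\to F$; $(f*a)(g)=\sum_hf(h)a(g-h)$, $\Delta_af=f*a$, and $\ker\Delta_{\bar a}=\bigcap_j\ker\Delta_{a_j}$. Characters are homomorphisms $G\to\bar K^\times$ ($G^\vee$ for finite $G$, $\mathrm{Char}(\Lambda,\bar K^\times)$ for a lattice $\Lambda$); a character $g^\vee$ is $\bar a$-harmonic if $g^\vee*a_j=0$ for all $j$. For a function $f$ with finitely many values in $\bar K$, let $\mathrm{GF}(q^{r(f)})$ be the smallest subfield of $\bar K$ containing $K$ and all values of $f$, and $\mathrm{Tr}(f)=f+f^q+\cdots+f^{q^{r(f)-1}}$ (powers taken pointwise); it is $K$-valued. Translates of $h$ are the functions $x\mapsto h(x+g)$. $\mathcal F_{\Lambda'}(\Lambda,K)$ is the space of $K$-valued functions on $\Lambda$ invariant under translation by $\Lambda'$. *)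

From HB Require Import structures.
From mathcomp Require Import all_boot all_order all_algebra all_field.
From mathcomp Require Import finmap.
Set Implicit Arguments. Unset Strict Implicit. Unset Printing Implicit Defensive.
Import GRing.Theory.
Local Open Scope ring_scope.

(* A character of an abelian group D with values in L^x : a group
   homomorphism (D,+) -> (L^x, * ).  (chi 0 = 1 and multiplicativity force
   all values to be units.) *)
Definition is_char (D : zmodType) (L : fieldType) (chi : D -> L) : Prop :=
  chi 0 = 1 /\ forall x y, chi (x + y) = chi x * chi y.

Definition convG (G : finZmodType) (R : nzRingType) (f a : G -> R) (g : G) : R :=
  \sum_(h : G) f h * a (g - h).

(* Convolution with a finitely supported K-valued function a on an abelian
   group D, the values of a being pushed into R by phi:
   (f * a)(g) = sum_h f(h) a(g - h) = sum_(k in supp a) f(g - k) a(k). *)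
Definition convF (Dz : zmodType) (K : fieldType) (R : nzRingType)
  (phi : K -> R) (f : Dz -> R) (a : {fsfun Dz -> K with 0}) (g : Dz) : R :=
  (\sum_(k <- finsupp a) f (g - k) * phi (a k))%R.

Definition in_GF (L : fieldType) (q m : nat) (x : L) : bool := x ^+ (q ^ m) == x.

(* r(f): GF(q^r) is the smallest subfield of L containing K = GF(q) and
   all values of f, i.e. r is the least m >= 1 with all values in GF(q^m). *)
Definition is_rdeg (D : Type) (L : fieldType) (q : nat) (f : D -> L) (r : nat) : Prop :=
  (0 < r)%N /\ (forall x, in_GF q r (f x)) /\
  (forall m, (0 < m)%N -> (forall x, in_GF q m (f x)) -> (r <= m)%N).

Definition trace_fun (D : Type) (L : fieldType) (q r : nat) (f : D -> L) (x : D) : L :=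
  \sum_(i < r) f x ^+ (q ^ i).

Definition Kspan (D : Type) (K L : fieldType) (iota : K -> L)
  (P : (D -> L) -> Prop) (h : D -> L) : Prop :=
  exists (N : nat) (c : 'I_N -> K) (v : 'I_N -> D -> L),
    (forall i, P (v i)) /\ forall x, h x = \sum_(i < N) iota (c i) * v i x.

Definition trace_translates (D : zmodType) (L : fieldType) (q : nat)
  (H : (D -> L) -> Prop) (v : D -> L) : Prop :=
  exists (chi : D -> L) (r : nat) (g : D),
    is_char chi /\ H chi /\ is_rdeg q chi r /\
    forall x, v x = trace_fun q r chi (x + g).

Definition is_subgroup (D : zmodType) (S : D -> Prop) : Prop :=
  S 0 /\ forall x y, S x -> S y -> S (x - y).

Definition has_index (D : zmodType) (S : D -> Prop) (m : nat) : Prop :=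
  exists s : 'I_m -> D,
    (forall x, exists i, S (x - s i)) /\
    (forall i j, S (s i - s j) -> i = j).

From HB Require Import structures.
From mathcomp Require Import all_boot all_order all_algebra all_field.
From mathcomp Require Import finmap cyclic.
From Stdlib Require Import IndefiniteDescription Classical Wf_nat.
Set Implicit Arguments. Unset Strict Implicit. Unset Printing Implicit Defensive.
Import GRing.Theory.
Local Open Scope ring_scope.

(* Let h be K-valued, S-periodic and harmonic, viewed in L.  Translations act
   on S-periodic functions with (translation by g)^m = 1, and m is prime to p,
   so averaging over the m-th roots of unity splits h into joint eigenfunctions
   of all translations; these are scalar multiples c * chi of harmonic
   characters chi of D/S.  Since h is fixed by the Frobenius x |-> x^q, the
   orthogonality relations of D/S show that the terms along the Frobenius orbit
   of chi add up to Tr(c * chi), and Tr(c * chi) is the K-linear combination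
   sum_j (1/m) Tr(c * chi)(-s_j) Tr(chi)(x + s_j) of translates of Tr(chi).
   Conversely convolution commutes with translations and with the Frobenius,
   so every translate of Tr(chi) is harmonic. *)

Lemma natr_coprime_neq0 (R : nzRingType) p m :
  p \in [pchar R] -> coprime m p -> m%:R != 0 :> R.
Proof.
move=> pcharRp; rewrite -(dvdn_pcharf pcharRp) -prime_coprime ?(pcharf_prime pcharRp) //.
by rewrite coprime_sym.
Qed.

Lemma unity_roots_exist (F : closedFieldType) m : (0 < m)%N -> m%:R != 0 :> F ->
  exists2 rs : seq F, uniq rs /\ size rs = m & forall z, (z \in rs) = (z ^+ m == 1).
Proof.
move=> m_gt0 m_neq0.
have [rs def_rs] := closed_field_poly_normal ('X^m - 1 : {poly F}).
rewrite (monicP (monicXnsubC 1 m_gt0)) scale1r in def_rs.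
exists rs; last by move=> z; rewrite -root_prod_XsubC -def_rs rootE !hornerE subr_eq0.
split; last by have := size_prod_XsubC rs id; rewrite -def_rs size_XnsubC // => -[].
by rewrite -separable_prod_XsubC -def_rs separable_Xn_sub_1.
Qed.

(* Multiplying by a fixed root permutes the roots, so the sum is fixed by a
   factor z ^- k; if it were nonzero every root would be a k-th root of unity. *)
Lemma sum_unity_roots_expVn (F : fieldType) (rs : seq F) m k :
  uniq rs -> size rs = m -> (forall z, (z \in rs) = (z ^+ m == 1)) ->
  (0 < k < m)%N -> \sum_(z <- rs) z ^- k = 0.
Proof.
move=> rs_uniq rs_size rsE /andP[k_gt0 k_lt_m].
have rs_neq0 z : z \in rs -> z != 0.
  rewrite rsE; apply: contraTneq => ->.
  by rewrite expr0n gtn_eqF ?(ltn_trans k_gt0) // eq_sym oner_eq0.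
set sum := \sum_(z <- rs) _.
have sum_fixed z0 : z0 \in rs -> z0 ^- k * sum = sum.
  move=> rs_z0; have mul_uniq : uniq (map ( *%R z0) rs).
    by rewrite map_inj_uniq //; apply: mulfI; apply: rs_neq0.
  have mul_sub : {subset map ( *%R z0) rs <= rs}.
    move=> _ /mapP[z rs_z ->]; move: rs_z rs_z0.
    by rewrite !rsE exprMn => /eqP-> /eqP->; rewrite mulr1.
  have [_ /(uniq_perm mul_uniq rs_uniq) perm_mul] :=
    uniq_min_size mul_uniq mul_sub (eq_leq (esym (size_map _ _))).
  rewrite {2}/sum -(perm_big _ perm_mul) big_map /sum mulr_sumr.
  by apply: eq_bigr => z _; rewrite exprMn invfM.
apply/eqP; apply: contraLR k_lt_m => sum_neq0; rewrite -leqNgt -rs_size.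
have roots_Xk : all (root ('X^k - 1)) rs.
  apply/allP => z rs_z; rewrite rootE !hornerE subr_eq0.
  have /(congr1 ( *%R^~ sum^-1)) := sum_fixed z rs_z.
  by rewrite -mulrA divff // mulr1 => /eqP; rewrite invr_eq1.
have Xk_neq0 : ('X^k - 1 : {poly F}) != 0 by rewrite -size_poly_eq0 size_XnsubC.
by have := max_poly_roots Xk_neq0 roots_Xk rs_uniq; rewrite size_XnsubC.
Qed.

Lemma sumr_cyclic_shift (R : zmodType) n (a : nat -> R) :
  a n = a 0%N -> \sum_(i < n) a i.+1 = \sum_(i < n) a i.
Proof.
case: n => [|n] a_n; first by rewrite !big_ord0.
by rewrite big_ord_recr big_ord_recl /= a_n addrC.
Qed.

Section KSpan.
Variables (D : Type) (K L : fieldType) (iota : {rmorphism K -> L}).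
Implicit Types (P Q : (D -> L) -> Prop) (h v : D -> L).

Lemma Kspan_ext P h h' : (forall x, h x = h' x) -> Kspan iota P h' -> Kspan iota P h.
Proof. by move=> eq_h [N [c [v [Pv def_h']]]]; exists N, c, v; split=> // x; rewrite eq_h. Qed.

Lemma Kspan0 P h : (forall x, h x = 0) -> Kspan iota P h.
Proof.
by move=> h0; exists 0%N, (fun _ => 0), (fun _ _ => 0); split=> [[] //|x]; rewrite big_ord0.
Qed.

Lemma Kspan_id P v : P v -> Kspan iota P v.
Proof.
by move=> Pv; exists 1%N, (fun _ => 1), (fun _ => v); split=> // x; rewrite big_ord1 rmorph1 mul1r.
Qed.

Lemma KspanD P h1 h2 :
  Kspan iota P h1 -> Kspan iota P h2 -> Kspan iota P (fun x => h1 x + h2 x).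
Proof.
move=> [N1 [c1 [v1 [Pv1 def_h1]]]] [N2 [c2 [v2 [Pv2 def_h2]]]].
pose cat (T : Type) (a1 : 'I_N1 -> T) (a2 : 'I_N2 -> T) i :=
  match split i with inl i1 => a1 i1 | inr i2 => a2 i2 end.
exists (N1 + N2)%N, (cat _ c1 c2), (cat _ v1 v2); split=> [i | x].
  by rewrite /cat; case: split.
rewrite big_split_ord def_h1 def_h2 /cat; congr (_ + _); apply: eq_bigr => i _.
  by rewrite (unsplitK (inl i)).
by rewrite (unsplitK (inr i)).
Qed.

Lemma KspanZ P c h : Kspan iota P h -> Kspan iota P (fun x => iota c * h x).
Proof.
move=> [N [c' [v [Pv def_h]]]]; exists N, (fun i => c * c' i), v; split=> // x.
by rewrite def_h mulr_sumr; apply: eq_bigr => i _; rewrite rmorphM mulrA.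
Qed.

Lemma Kspan_sum P (I : eqType) (r : seq I) (F : I -> D -> L) :
  {in r, forall i, Kspan iota P (F i)} -> Kspan iota P (fun x => \sum_(i <- r) F i x).
Proof.
elim: r => [_|i r IHr span_F]; first by apply: Kspan0 => x; rewrite big_nil.
apply: Kspan_ext (fun x => big_cons _ _ _ _ _ _) _.
apply: KspanD; first by apply: span_F; rewrite mem_head.
by apply: IHr => j r_j; apply: span_F; rewrite inE r_j orbT.
Qed.

Lemma Kspan_trans P Q h :
  (forall v, P v -> Kspan iota Q v) -> Kspan iota P h -> Kspan iota Q h.
Proof.
move=> PQ [N [c [v [Pv def_h]]]]; apply: Kspan_ext def_h _.
by apply: Kspan_sum => i _; apply/KspanZ/PQ.
Qed.

Lemma Kspan_iff P Q h :
  (forall v, P v <-> Q v) -> Kspan iota P h <-> Kspan iota Q h.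
Proof. by move=> PQ; split; apply: Kspan_trans => v /PQ; apply: Kspan_id. Qed.

End KSpan.

Section CosetRepresentatives.
Variables (D : zmodType) (S : D -> Prop) (m : nat) (s : 'I_m -> D).
Hypothesis S_subgroup : is_subgroup S.
Hypothesis s_cover : forall x, exists i, S (x - s i).
Hypothesis s_inj : forall i j, S (s i - s j) -> i = j.

Definition periodic (R : Type) (F : D -> R) := forall x l, S l -> F (x + l) = F x.

Lemma subgroup0 : S 0. Proof. by case: S_subgroup. Qed.

Lemma subgroupB x y : S x -> S y -> S (x - y). Proof. by case: S_subgroup => _; apply. Qed.

Lemma subgroupD x y : S x -> S y -> S (x + y).
Proof. by move=> Sx Sy; rewrite -[y]opprK -[- y]sub0r; apply/subgroupB/subgroupB/Sy/subgroup0. Qed.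

Lemma subgroup_sum (I : Type) (r : seq I) (F : I -> D) :
  (forall i, S (F i)) -> S (\sum_(i <- r) F i).
Proof. by move=> SF; elim/big_rec: _ => [|i x _ Sx]; [apply: subgroup0 | apply: subgroupD]. Qed.

Lemma index_gt0 : (0 < m)%N.
Proof. by have [[i i_lt_m] _] := s_cover 0; apply: leq_ltn_trans i_lt_m. Qed.

Definition coset_index (x : D) : 'I_m :=
  proj1_sig (constructive_indefinite_description _ (s_cover x)).

Lemma coset_indexP x : S (x - s (coset_index x)).
Proof. exact: proj2_sig (constructive_indefinite_description _ (s_cover x)). Qed.

Definition rep_shift (g : D) (j : 'I_m) : 'I_m := coset_index (s j + g).

Lemma rep_shift_inj g : injective (rep_shift g).
Proof.
move=> i j eq_ij; apply: s_inj.
have := subgroupB (coset_indexP (s i + g)) (coset_indexP (s j + g)).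
by rewrite -/(rep_shift g i) -/(rep_shift g j) eq_ij opprB addrA subrK [s j + g]addrC addrKA.
Qed.

Lemma sum_reps_shift (R : zmodType) (F : D -> R) g :
  periodic F -> \sum_(j < m) F (s j + g) = \sum_(j < m) F (s j).
Proof.
move=> F_per; rewrite [RHS](reindex_inj (@rep_shift_inj g)); apply: eq_bigr => j _.
by rewrite -[s j + g](subrK (s (rep_shift g j))) addrC F_per //; apply: coset_indexP.
Qed.

Lemma subgroup_mulrn_index g : S (g *+ m).
Proof.
have sum_shift : \sum_(j < m) s (rep_shift g j) = \sum_(j < m) s j.
  exact: esym (reindex_inj (@rep_shift_inj g)).
have := subgroup_sum (index_enum 'I_m) (fun j => coset_indexP (s j + g)).
by rewrite sumrB big_split /= sumr_const card_ord sum_shift addrAC subrr add0r.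
Qed.

End CosetRepresentatives.

Section Characters.
Variables (D : zmodType) (L : fieldType).
Implicit Types chi : D -> L.

Lemma char_neq0 chi : is_char chi -> forall x, chi x != 0.
Proof.
move=> [chi0 chiD] x; apply: contra_eq_neq (chiD x (- x)) => ->.
by rewrite mul0r subrr chi0 oner_neq0.
Qed.

Lemma charN chi x : is_char chi -> chi (- x) = (chi x)^-1.
Proof.
move=> chi_char; have [chi0 chiD] := chi_char; apply: (mulfI (char_neq0 chi_char x)).
by rewrite -chiD subrr chi0 divff ?char_neq0.
Qed.

Lemma char_mulrn chi x n : is_char chi -> chi (x *+ n) = chi x ^+ n.
Proof.
move=> [chi0 chiD]; elim: n => [|n IHn]; first by rewrite mulr0n chi0 expr0.
by rewrite mulrS chiD IHn exprS.
Qed.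

End Characters.

Section FiniteFieldCoefficients.
Variables (K : finFieldType) (p : nat) (pcharKp : p \in [pchar K]).
Variables (L : fieldType) (iota : {rmorphism K -> L}).
Local Notation q := #|K|.

Lemma pchar_nat_card_pow l : [pchar L].-nat (q ^ l)%N.
Proof.
have pcharLp : p \in [pchar L] := rmorph_pchar iota pcharKp.
have pq : p.-nat (q ^ l)%N.
  by rewrite (card_pprimeChar pcharKp) -expnM pnatX pnat_id ?(pcharf_prime pcharKp).
by apply: sub_in_pnat pq => r _ /eqnP ->.
Qed.

Definition frob (l : nat) (x : L) : L := x ^+ (q ^ l).

Lemma frobD l x y : frob l (x + y) = frob l x + frob l y.
Proof. exact: exprDn_pchar (pchar_nat_card_pow l). Qed.

Fact frob_is_zmod_morphism l : zmod_morphism (frob l).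
Proof.
move=> x y /=; rewrite frobD; congr (_ + _); apply/eqP.
by rewrite -addr_eq0 -frobD addNr /frob expr0n gtn_eqF // expn_gt0 (ltnW (finNzRing_gt1 K)).
Qed.

HB.instance Definition _ l :=
  GRing.isZmodMorphism.Build L L (frob l) (frob_is_zmod_morphism l).

Fact frob_is_monoid_morphism l : monoid_morphism (frob l).
Proof. by split=> [|x y]; rewrite /frob ?expr1n ?exprMn. Qed.

HB.instance Definition _ l :=
  GRing.isMonoidMorphism.Build L L (frob l) (frob_is_monoid_morphism l).

Lemma frob0n x : frob 0 x = x.
Proof. by rewrite /frob expn0 expr1. Qed.

Lemma frob1n x : frob 1 x = x ^+ q.
Proof. by rewrite /frob expn1. Qed.

Lemma frobS l x : frob l.+1 x = frob 1 (frob l x).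
Proof. by rewrite /frob expnSr exprM expn1. Qed.

Lemma frob_fixed l x : frob 1 x = x -> frob l x = x.
Proof. by move=> x1; elim: l => [|l IHl]; rewrite ?frob0n // frobS IHl. Qed.

Lemma frob_iota l k : frob l (iota k) = iota k.
Proof. by apply: frob_fixed; rewrite frob1n -rmorphXn expf_card. Qed.

Definition iota_inv (x : L) : K := odflt 0 [pick k | iota k == x].

Lemma iota_invK x : frob 1 x = x -> iota (iota_inv x) = x.
Proof.
rewrite frob1n => x1; rewrite /iota_inv; case: pickP => [k /eqP // | no_k].
have := congr1 (map_poly iota) (finField_genPoly K).
rewrite rmorphB /= map_polyXn map_polyX rmorph_prod /=.
under eq_bigr do rewrite map_polyXsubC.
move=> /(congr1 (root^~ x)); rewrite /= rootE !hornerE x1 subrr eqxx.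
rewrite -big_enum /= -(big_map iota xpredT (fun z => 'X - z%:P)) root_prod_XsubC.
by case/esym/mapP => k _ xk; have := no_k k; rewrite xk eqxx.
Qed.

Section HarmonicSpan.
Variables (D : zmodType) (S : D -> Prop) (m : nat) (s : 'I_m -> D).
Hypothesis S_subgroup : is_subgroup S.
Hypothesis s_cover : forall x, exists i, S (x - s i).
Hypothesis s_inj : forall i j, S (s i - s j) -> i = j.
Hypothesis m_coprime : coprime m p.
Variables (t : nat) (A : 'I_t -> seq (D * K)).
Implicit Types (F h chi psi : D -> L).

Definition conv_seq (h : D -> L) (B : seq (D * K)) (x : D) : L :=
  \sum_(kc <- B) h (x - kc.1) * iota kc.2.

Definition harmonic (h : D -> L) := forall j x, conv_seq h (A j) x = 0.

Definition quotient_char (chi : D -> L) := is_char chi /\ forall l, S l -> chi l = 1.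

Definition trace_span : (D -> L) -> Prop :=
  Kspan iota (trace_translates q (fun chi => (forall l, S l -> chi l = 1) /\ harmonic chi)).

Local Notation periodic := (periodic S).

Let m_gt0 : (0 < m)%N := index_gt0 s_cover.

Lemma natr_index_neq0 : m%:R != 0 :> L.
Proof. exact: natr_coprime_neq0 (rmorph_pchar iota pcharKp) m_coprime. Qed.

Lemma conv_seq_scale c h B x : conv_seq (fun y => h y * c) B x = conv_seq h B x * c.
Proof. by rewrite /conv_seq mulr_suml; apply: eq_bigr => kc _; rewrite mulrAC. Qed.

Lemma harmonic_scale c h : harmonic h -> harmonic (fun y => h y * c).
Proof. by move=> h_harm j x; rewrite conv_seq_scale h_harm mul0r. Qed.

Lemma quotient_char_periodic chi : quotient_char chi -> periodic chi.
Proof. by move=> [[_ chiD] chi_S] x l S_l; rewrite chiD (chi_S l S_l) mulr1. Qed.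

Lemma quotient_char_unity chi x : quotient_char chi -> chi x ^+ m = 1.
Proof.
move=> [chi_char chi_S]; rewrite -char_mulrn // chi_S //.
exact: subgroup_mulrn_index S_subgroup s_cover s_inj x.
Qed.

Lemma quotient_char_frob l chi : quotient_char chi -> quotient_char (frob l \o chi).
Proof.
move=> [[chi0 chiD] chi_S]; split; first split=> [|x y] /=.
- by rewrite chi0 rmorph1.
- by rewrite chiD rmorphM.
- by move=> l' S_l' /=; rewrite chi_S ?rmorph1.
Qed.

Definition char_dot (psi chi : D -> L) : L :=
  (m%:R)^-1 * \sum_(j < m) (psi (s j))^-1 * chi (s j).

Definition isotypic_proj (psi h : D -> L) (x : D) : L :=
  (m%:R)^-1 * \sum_(j < m) (psi (s j))^-1 * h (x + s j).

Lemma eq_char_dot psi psi' chi : psi =1 psi' -> char_dot psi chi = char_dot psi' chi.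
Proof. by move=> eq_psi; rewrite /char_dot; under eq_bigr do rewrite eq_psi. Qed.

Lemma eq_isotypic_proj psi psi' h x :
  psi =1 psi' -> isotypic_proj psi h x = isotypic_proj psi' h x.
Proof. by move=> eq_psi; rewrite /isotypic_proj; under eq_bigr do rewrite eq_psi. Qed.

Lemma isotypic_proj_char psi chi x :
  is_char chi -> isotypic_proj psi chi x = char_dot psi chi * chi x.
Proof.
move=> [_ chiD]; rewrite /isotypic_proj /char_dot -mulrA mulr_suml; congr (_ * _).
by apply: eq_bigr => j _; rewrite chiD mulrCA mulrC.
Qed.

Lemma isotypic_proj_sum psi n (c : 'I_n -> L) (chi : 'I_n -> D -> L) h x :
  (forall y, h y = \sum_(i < n) c i * chi i y) ->
  isotypic_proj psi h x = \sum_(i < n) c i * isotypic_proj psi (chi i) x.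
Proof.
move=> def_h; rewrite /isotypic_proj.
under eq_bigr do rewrite def_h mulr_sumr.
rewrite exchange_big /= mulr_sumr; apply: eq_bigr => i _.
by rewrite [RHS]mulrCA [in RHS]mulr_sumr; congr (_ * _); apply: eq_bigr => j _; rewrite mulrCA.
Qed.

Lemma char_dotii chi : is_char chi -> char_dot chi chi = 1.
Proof.
move=> chi_char; rewrite /char_dot.
under eq_bigr do rewrite mulVf ?char_neq0 //.
by rewrite sumr_const card_ord mulVf ?natr_index_neq0.
Qed.

(* If psi <> chi, the function rho = chi / psi is a nontrivial character of
   D/S, and translating by g with rho g <> 1 rescales sum_j rho (s j). *)
Lemma char_dot_eq0 psi chi :
  quotient_char psi -> quotient_char chi -> char_dot psi chi = 0 \/ psi =1 chi.
Proof.
move=> psi_qchar chi_qchar; have [[_ psiD] _] := psi_qchar; have [[_ chiD] _] := chi_qchar.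
pose rho y := chi y / psi y.
have [rho1 | /not_all_ex_not[g rho_g]] := classic (forall g, rho g = 1).
  by right=> x; have := rho1 x; rewrite /rho => /divr1_eq.
left; have rho_per : periodic rho.
  by move=> x l S_l; rewrite /rho !quotient_char_periodic.
have := sum_reps_shift S_subgroup s_cover s_inj g rho_per.
under eq_bigr do rewrite /rho chiD psiD invfM mulrACA -/(rho _) -/(rho g).
rewrite -mulr_suml => /eqP; rewrite -subr_eq0 -[X in _ - X]mulr1 -mulrBr mulf_eq0 subr_eq0.
rewrite (negbTE (introN eqP rho_g)) orbF => /eqP sum_rho.
by rewrite /char_dot (eq_bigr (fun j => rho (s j))) ?sum_rho ?mulr0 // => j _; rewrite mulrC.
Qed.

Lemma frob_isotypic_proj l psi h x : (forall y, frob l (h y) = h y) ->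
  frob l (isotypic_proj psi h x) = isotypic_proj (frob l \o psi) h x.
Proof.
move=> h_fixed; rewrite /isotypic_proj rmorphM fmorphV rmorph_nat rmorph_sum.
by congr (_ * _); apply: eq_bigr => j _; rewrite rmorphM fmorphV /= h_fixed.
Qed.

(* The values of chi are m-th roots of unity and q is a unit mod m, so
   Euler's theorem bounds the degree by totient m. *)
Lemma rdeg_exists chi : quotient_char chi -> exists r, is_rdeg q chi r.
Proof.
move=> chi_qchar.
have q_coprime : coprime q m.
  by rewrite (card_pprimeChar pcharKp) coprimeXl // coprime_sym.
have chi_totient x : in_GF q (totient m) (chi x).
  rewrite /in_GF -(expr_mod _ (quotient_char_unity x chi_qchar)) Euler_exp_totient //.
  by rewrite expr_mod ?quotient_char_unity // expr1.
pose P r := (0 < r)%N /\ forall x, in_GF q r (chi x).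
have [|r [[[r_gt0 chi_r] r_min] _]] :=
  dec_inh_nat_subset_has_unique_least_element P (fun r => classic (P r)).
  by exists (totient m); split; rewrite ?totient_gt0.
by exists r; do 2!split=> //; move=> r' r'_gt0 chi_r'; apply/leP/r_min.
Qed.

Lemma char_dot_frob_orbit chi r l : quotient_char chi -> is_rdeg q chi r ->
  (0 < l < r)%N -> char_dot (frob l \o chi) chi = 0.
Proof.
move=> chi_qchar [_ [_ r_min]] /andP[l_gt0 l_lt_r].
have [//|eq_chi] := char_dot_eq0 (quotient_char_frob l chi_qchar) chi_qchar.
by have := r_min l l_gt0 (fun x => introT eqP (eq_chi x)); rewrite leqNgt l_lt_r.
Qed.

Lemma sum_char_dot_orbit chi r (a : nat -> L) : quotient_char chi -> is_rdeg q chi r ->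
  \sum_(l < r) a l * char_dot (frob l \o chi) chi = a 0%N.
Proof.
move=> chi_qchar chi_r; case: r chi_r => [[]//|r chi_r].
rewrite big_ord_recl big1 => [|l _]; last first.
  by rewrite (char_dot_frob_orbit chi_qchar chi_r) ?mulr0 // lift0 /= ltnS ltn_ord.
by rewrite (@eq_char_dot _ chi) ?char_dotii ?addr0 ?mulr1 //; case: chi_qchar.
Qed.

Lemma trace_funE (T : Type) r (f : T -> L) x : trace_fun q r f x = \sum_(l < r) frob l (f x).
Proof. by []. Qed.

Lemma trace_frob_fixed chi r c : is_rdeg q chi r -> frob r c = c ->
  forall x, frob 1 (trace_fun q r (fun y => c * chi y) x) = trace_fun q r (fun y => c * chi y) x.
Proof.
move=> [_ [chi_r _]] c_r x; rewrite !trace_funE rmorph_sum /=.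
under eq_bigr do rewrite -frobS.
rewrite (@sumr_cyclic_shift _ r (fun l => frob l (c * chi x))) //=.
by rewrite rmorphM /= c_r frob0n; congr (_ * _); apply/eqP; exact: chi_r.
Qed.

Lemma trace_span_trace chi r c : quotient_char chi -> harmonic chi -> is_rdeg q chi r ->
  frob r c = c -> trace_span (trace_fun q r (fun y => c * chi y)).
Proof.
move=> chi_qchar chi_harm chi_r c_r; have [[chi0 chiD] chi_S] := chi_qchar.
set u := trace_fun q r _; have u_fixed := trace_frob_fixed chi_r c_r.
pose a j := iota_inv ((m%:R)^-1 * u (- s j)).
have a_E j : iota (a j) = (m%:R)^-1 * u (- s j).
  by apply: iota_invK; rewrite rmorphM fmorphV rmorph_nat /= u_fixed.
have sum_a : \sum_(j < m) iota (a j) * chi (s j) = c.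
  rewrite -[RHS]frob0n -(sum_char_dot_orbit (fun l => frob l c) chi_qchar chi_r).
  under eq_bigr do rewrite a_E /u trace_funE -mulrA mulr_suml.
  rewrite -mulr_sumr exchange_big mulr_sumr; apply: eq_bigr => l _.
  rewrite /char_dot [RHS]mulrCA [in RHS]mulr_sumr; congr (_ * _); apply: eq_bigr => j _.
  by rewrite rmorphM /= charN // fmorphV mulrA.
exists m, a, (fun j x => trace_fun q r chi (x + s j)); split=> [j | x].
  by exists chi, r, (s j); split; [case: chi_qchar | do 2!split].
rewrite /u trace_funE -sum_a.
under eq_bigr do rewrite mulr_suml rmorph_sum.
rewrite exchange_big; apply: eq_bigr => j _; rewrite trace_funE mulr_sumr.
by apply: eq_bigr => l _; rewrite -mulrA -chiD addrC !rmorphM /= frob_iota.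
Qed.

Lemma isotypic_proj_char_combination psi n (c : 'I_n -> L) (chi : 'I_n -> D -> L) h x :
  quotient_char psi -> (forall i, c i = 0 \/ quotient_char (chi i)) ->
  (forall y, h y = \sum_(i < n) c i * chi i y) ->
  isotypic_proj psi h x = (\sum_(i < n) c i * char_dot psi (chi i)) * psi x.
Proof.
move=> psi_qchar chi_ok def_h; rewrite (isotypic_proj_sum _ x def_h) mulr_suml.
apply: eq_bigr => i _; have [-> | chi_qchar] := chi_ok i; first by rewrite !mul0r.
rewrite isotypic_proj_char; last by case: chi_qchar.
have [-> | eq_chi] := char_dot_eq0 psi_qchar chi_qchar; first by rewrite !(mulr0, mul0r).
by rewrite -eq_chi mulrA.
Qed.

Lemma sub_isotypic_orbit psi r n (c : 'I_n -> L) (chi : 'I_n -> D -> L) h x :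
  (forall i, c i = 0 \/ quotient_char (chi i)) ->
  (forall y, h y = \sum_(i < n) c i * chi i y) ->
  h x - \sum_(l < r) isotypic_proj (frob l \o psi) h x =
  \sum_(i < n) c i * (1 - \sum_(l < r) char_dot (frob l \o psi) (chi i)) * chi i x.
Proof.
move=> chi_ok def_h; under eq_bigr do rewrite (isotypic_proj_sum _ x def_h).
rewrite exchange_big def_h -sumrB; apply: eq_bigr => i _ /=.
have [-> | [chi_char _]] := chi_ok i.
  by rewrite !mul0r big1 ?subr0 // => l _; rewrite mul0r.
under eq_bigr do rewrite isotypic_proj_char // mulrA.
by rewrite -mulr_suml -mulr_sumr mulrBr mulr1 mulrBl.
Qed.

Lemma frob_isotypic_coef psi r h k : quotient_char psi -> is_rdeg q psi r ->
  (forall y, frob 1 (h y) = h y) -> (forall y, isotypic_proj psi h y = k * psi y) ->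
  frob r k = k.
Proof.
move=> [[psi0 _] _] [_ [psi_r _]] h_fixed proj_h.
rewrite -[k]mulr1 -psi0 -proj_h frob_isotypic_proj => [|y]; last exact: frob_fixed.
by apply: eq_isotypic_proj => y; apply/eqP/psi_r.
Qed.

Lemma sum_isotypic_frob_orbit psi r h k :
  (forall y, frob 1 (h y) = h y) -> (forall y, isotypic_proj psi h y = k * psi y) ->
  forall x, \sum_(l < r) isotypic_proj (frob l \o psi) h x = trace_fun q r (fun y => k * psi y) x.
Proof.
move=> h_fixed proj_h x; rewrite trace_funE; apply: eq_bigr => l _.
by rewrite -frob_isotypic_proj ?proj_h // => y; apply: frob_fixed.
Qed.

(* Induction on the number of terms: the Frobenius orbit of the first
   character is removed by subtracting the trace of its isotypic component. *)
Lemma trace_span_char_combination n (c : 'I_n -> L) (chi : 'I_n -> D -> L) h :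
  (forall i, c i = 0 \/ quotient_char (chi i) /\ harmonic (chi i)) ->
  (forall x, h x = \sum_(i < n) c i * chi i x) -> (forall x, frob 1 (h x) = h x) ->
  trace_span h.
Proof.
elim: n c chi h => [|n IHn] c chi h chi_ok def_h h_fixed.
  by apply: Kspan0 => x; rewrite def_h big_ord0.
have chi_ok' i : c i = 0 \/ quotient_char (chi i).
  by case: (chi_ok i) => [|[]]; [left | right].
have [c0 | [psi_qchar psi_harm]] := chi_ok ord0.
  apply: (IHn (c \o lift ord0) (chi \o lift ord0)) => // [i | x]; first exact: chi_ok.
  by rewrite def_h big_ord_recl c0 mul0r add0r.
set psi := chi ord0 in psi_qchar psi_harm; have [r psi_r] := rdeg_exists psi_qchar.
set k := \sum_(i < n.+1) c i * char_dot psi (chi i).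
have proj_h x : isotypic_proj psi h x = k * psi x.
  exact: isotypic_proj_char_combination psi_qchar chi_ok' def_h.
have k_r := frob_isotypic_coef psi_qchar psi_r h_fixed proj_h.
pose u := trace_fun q r (fun y => k * psi y).
pose gamma i := 1 - \sum_(l < r) char_dot (frob l \o psi) (chi i).
have gamma0 : gamma ord0 = 0.
  rewrite /gamma -{1}(sum_char_dot_orbit (fun=> 1) psi_qchar psi_r) -sumrB big1 // => l _.
  by rewrite mul1r subrr.
have def_hu x :
    h x - u x = \sum_(i < n) (c (lift ord0 i) * gamma (lift ord0 i)) * chi (lift ord0 i) x.
  rewrite /u -(sum_isotypic_frob_orbit r h_fixed proj_h) (sub_isotypic_orbit _ _ _ chi_ok' def_h).
  by rewrite big_ord_recl -/(gamma ord0) gamma0 mulr0 mul0r add0r.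
apply: Kspan_ext (fun x => esym (subrK (u x) (h x))) _.
apply: KspanD; last exact: trace_span_trace psi_qchar psi_harm psi_r k_r.
apply: IHn def_hu _ => [i | x].
  by have [-> | ] := chi_ok (lift ord0 i); [left; rewrite mul0r | right].
by rewrite rmorphB /= h_fixed (trace_frob_fixed psi_r k_r).
Qed.

Lemma trace_span_harmonic h : trace_span h -> harmonic h.
Proof.
move=> [N [c [v [v_tr def_h]]]] j x; rewrite /conv_seq.
under eq_bigr do rewrite def_h mulr_suml.
rewrite exchange_big big1 // => i _.
have [chi [r [g [_ [[_ chi_harm] [_ def_v]]]]]] := v_tr i.
under eq_bigr do rewrite -mulrA def_v trace_funE mulr_suml.
rewrite -mulr_sumr exchange_big big1 ?mulr0 //= => l _.
transitivity (frob l (conv_seq chi (A j) (x + g))); last by rewrite chi_harm rmorph0.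
rewrite /conv_seq rmorph_sum; apply: eq_bigr => kc _.
by rewrite rmorphM /= frob_iota addrAC.
Qed.

Definition translation_eigen (F : D -> L) (g : D) := exists la, forall x, F (x + g) = la * F x.

Lemma eigen_reps_translation F :
  periodic F -> (forall i, translation_eigen F (s i)) -> forall g, translation_eigen F g.
Proof.
move=> F_per F_eig g; have [i S_gi] := s_cover g; have [la F_si] := F_eig i.
by exists la => x; rewrite -(subrK (s i) g) addrA F_si F_per.
Qed.

Lemma eigen_reps_scale F :
  periodic F -> (forall i, translation_eigen F (s i)) -> forall x, F x = F 0 * (F x / F 0).
Proof.
move=> F_per F_eig x; have [F0 | F0] := eqVneq (F 0) 0; last by rewrite mulrC divfK.
have [la F_x] := eigen_reps_translation F_per F_eig x.
by rewrite -[x]add0r F_x F0 !(mulr0, mul0r).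
Qed.

Lemma eigen_reps_char F :
  periodic F -> (forall i, translation_eigen F (s i)) -> F 0 != 0 ->
  quotient_char (fun x => F x / F 0).
Proof.
move=> F_per F_eig F0; split; first split=> [|x y]; first by rewrite divff.
- have [la F_y] := eigen_reps_translation F_per F_eig y.
  have F_y0 : F y = la * F 0 by rewrite -[y]add0r F_y.
  by rewrite F_y F_y0 mulfK // [la * _]mulrC mulrAC.
- by move=> l S_l; rewrite -[l]add0r F_per // divff.
Qed.

Section EigenDecomposition.
Variable rs : seq L.
Hypotheses (rs_uniq : uniq rs) (rs_size : size rs = m).
Hypothesis rsE : forall z, (z \in rs) = (z ^+ m == 1).

Definition eigen_proj (g : D) (z : L) (F : D -> L) (x : D) : L :=
  (m%:R)^-1 * \sum_(k < m) z ^- k * F (x + g *+ k).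

Lemma sum_eigen_proj g F x : \sum_(z <- rs) eigen_proj g z F x = F x.
Proof.
rewrite /eigen_proj -mulr_sumr exchange_big /=.
under eq_bigr do rewrite -mulr_suml.
rewrite (bigD1 (Ordinal m_gt0)) //= [X in _ + X]big1 => [|k k_neq0]; last first.
  have k_gt0 : (0 < k)%N by rewrite lt0n; apply: contraNneq k_neq0 => k0; exact/eqP/val_inj.
  by rewrite (sum_unity_roots_expVn rs_uniq rs_size rsE) ?mul0r ?k_gt0 /=.
rewrite addr0 mulr0n addr0 (eq_bigr (fun=> 1)) => [|z _]; last by rewrite expr0 invr1.
by rewrite big_const_seq count_predT iter_addr_0 rs_size mulKf ?natr_index_neq0.
Qed.

Lemma eigen_proj_translation g z F :
  z \in rs -> periodic F -> translation_eigen (eigen_proj g z F) g.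
Proof.
rewrite rsE => /eqP z_m F_per; exists z => x.
have z_neq0 : z != 0 by apply: contra_eq_neq z_m => ->; rewrite expr0n gtn_eqF // eq_sym oner_neq0.
pose a k := z * (z ^- k * F (x + g *+ k)).
rewrite /eigen_proj [RHS]mulrCA [in RHS]mulr_sumr; congr (_ * _).
rewrite -(@sumr_cyclic_shift _ m a); last first.
  rewrite /a z_m invr1 mul1r F_per; last exact: (subgroup_mulrn_index S_subgroup s_cover s_inj).
  by rewrite mulr0n addr0 mul1r.
by apply: eq_bigr => k _; rewrite /a mulrS addrA exprS invfM !mulrA mulfV // mul1r.
Qed.

Lemma eigen_proj_eigen g z F d la :
  (forall y, F (y + d) = la * F y) -> forall x, eigen_proj g z F (x + d) = la * eigen_proj g z F x.
Proof.
move=> F_d x; rewrite /eigen_proj [RHS]mulrCA [in RHS]mulr_sumr; congr (_ * _).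
by apply: eq_bigr => k _; rewrite addrAC F_d mulrCA.
Qed.

Lemma eigen_proj_periodic g z F : periodic F -> periodic (eigen_proj g z F).
Proof.
move=> F_per x l S_l; rewrite (@eigen_proj_eigen g z F l 1) ?mul1r // => y.
by rewrite mul1r F_per.
Qed.

Lemma conv_seq_eigen_proj g z F B x :
  conv_seq (eigen_proj g z F) B x = eigen_proj g z (conv_seq F B) x.
Proof.
rewrite /conv_seq /eigen_proj.
under eq_bigr do rewrite -mulrA mulr_suml mulr_sumr.
rewrite exchange_big /= mulr_sumr; apply: eq_bigr => k _.
rewrite !mulr_sumr; apply: eq_bigr => kc _.
by rewrite addrAC !mulrA.
Qed.

Lemma eigen_proj_harmonic g z F : harmonic F -> harmonic (eigen_proj g z F).
Proof.
move=> F_harm j x; rewrite conv_seq_eigen_proj /eigen_proj big1 ?mulr0 // => k _.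
by rewrite F_harm mulr0.
Qed.

Definition eigen_harmonic (gs : seq D) (F : D -> L) :=
  [/\ periodic F, harmonic F & forall g, g \in gs -> translation_eigen F g].

Lemma eigen_decomposition gs h :
  periodic h -> harmonic h -> Kspan iota (eigen_harmonic gs) h.
Proof.
move=> h_per h_harm; elim: gs => [|g gs]; first by apply: Kspan_id.
apply: Kspan_trans => F [F_per F_harm F_eig].
apply: Kspan_ext (fun x => esym (sum_eigen_proj g F x)) _.
apply: Kspan_sum => z rs_z; apply: Kspan_id; split.
- exact: eigen_proj_periodic.
- exact: eigen_proj_harmonic.
- move=> g'; rewrite inE => /predU1P[-> | gs_g']; first exact: eigen_proj_translation.
  by have [la F_g'] := F_eig g' gs_g'; exists la; apply: eigen_proj_eigen.
Qed.

Lemma trace_span_of_harmonic h :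
  periodic h -> harmonic h -> (forall x, frob 1 (h x) = h x) -> trace_span h.
Proof.
move=> h_per h_harm h_fixed.
have [N [c [F [F_eig def_h]]]] := eigen_decomposition (map s (enum 'I_m)) h_per h_harm.
have F_reps i j : translation_eigen (F i) (s j).
  by have [_ _ F_eig_i] := F_eig i; apply: F_eig_i; rewrite map_f ?mem_enum.
apply: (@trace_span_char_combination N (fun i => iota (c i) * F i 0)
                                       (fun i x => F i x / F i 0)) => // [i | x].
  have [F_per F_harm _] := F_eig i; have [F0 | F0] := eqVneq (F i 0) 0.
    by left; rewrite F0 mulr0.
  by right; split; [apply: eigen_reps_char | apply: harmonic_scale].
rewrite def_h; apply: eq_bigr => i _; have [F_per _ _] := F_eig i.
by rewrite -mulrA -eigen_reps_scale.
Qed.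

End EigenDecomposition.

End HarmonicSpan.
End FiniteFieldCoefficients.

Lemma trace_translates_iff (D : zmodType) (L : fieldType) q (H1 H2 : (D -> L) -> Prop) v :
  (forall chi, is_char chi -> H1 chi <-> H2 chi) ->
  trace_translates q H1 v <-> trace_translates q H2 v.
Proof.
move=> H12; split=> -[chi [r [g [chi_char [H_chi chi_r]]]]]; exists chi, r, g;
  by do 2!split=> //; apply/(H12 _ chi_char).
Qed.

Theorem harmonic_iff_trace_span (K : finFieldType) p (pcharKp : p \in [pchar K])
    (L : closedFieldType) (iota : {rmorphism K -> L}) (D : zmodType) (S : D -> Prop) m
    (t : nat) (A : 'I_t -> seq (D * K)) (f : D -> K) :
  is_subgroup S -> has_index S m -> coprime m p -> periodic S f ->
  harmonic iota A (iota \o f) <-> trace_span iota S A (iota \o f).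
Proof.
move=> S_subgroup [s [s_cover s_inj]] m_coprime f_per.
have m_neq0 := natr_coprime_neq0 (rmorph_pchar iota pcharKp) m_coprime.
have [rs [rs_uniq rs_size] rsE] := unity_roots_exist (index_gt0 s_cover) m_neq0.
split=> [f_harm | /(trace_span_harmonic pcharKp) //].
apply: (trace_span_of_harmonic pcharKp S_subgroup s_cover s_inj m_coprime
          rs_uniq rs_size rsE) => //.
  by move=> x l S_l /=; rewrite f_per.
by move=> x; rewrite frob_iota.
Qed.

Lemma is_subgroup_trivial (G : zmodType) : is_subgroup (fun x : G => x = 0).
Proof. by split=> // x y -> ->; rewrite subr0. Qed.

Lemma has_index_trivial (G : finZmodType) : has_index (fun x : G => x = 0) #|G|.
Proof.
exists enum_val; split=> [x | i j /eqP]; first by exists (enum_rank x); rewrite enum_rankK subrr.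
by rewrite subr_eq0 => /eqP /enum_val_inj.
Qed.

Lemma rmorph_convG (G : finZmodType) (K L : fieldType) (iota : {rmorphism K -> L})
    (f a : G -> K) x :
  iota (convG f a x) = convG (iota \o f) (iota \o a) x.
Proof. by rewrite rmorph_sum; apply: eq_bigr => y _; rewrite rmorphM. Qed.

Lemma rmorph_convF (D : zmodType) (K L : fieldType) (iota : {rmorphism K -> L})
    (f : D -> K) (a : {fsfun D -> K with 0}) x :
  iota (convF id f a x) = convF iota (iota \o f) a x.
Proof. by rewrite rmorph_sum; apply: eq_bigr => k _; rewrite rmorphM. Qed.

Corollary convG_kernel_span (K : finFieldType) p (pcharKp : p \in [pchar K])
    (L : closedFieldType) (iota : {rmorphism K -> L}) (G : finZmodType)
    (t : nat) (a : 'I_t -> G -> K) (f : G -> K) :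
  coprime #|G| p ->
  (forall j x, convG f (a j) x = 0) <->
  Kspan iota (trace_translates #|K| (fun chi => forall j x, convG chi (iota \o a j) x = 0))
    (iota \o f).
Proof.
move=> G_coprime; pose A j := [seq (k, a j k) | k <- enum G].
have conv_A h j x : conv_seq iota h (A j) x = convG h (iota \o a j) x.
  rewrite /conv_seq big_map big_enum /convG (reindex_inj (subrI x)) /=.
  by apply: eq_bigr => k _; rewrite subKr.
have f_per : periodic (fun x : G => x = 0) f by move=> x l ->; rewrite addr0.
apply: iff_trans (iff_trans (harmonic_iff_trace_span pcharKp iota A (is_subgroup_trivial G)
  (has_index_trivial G) G_coprime f_per) _).
  split=> f_harm j x; first by rewrite conv_A -rmorph_convG f_harm rmorph0.
  by apply: (fmorph_inj iota); rewrite rmorph0 rmorph_convG -conv_A.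
apply: Kspan_iff => v; apply: trace_translates_iff => chi [chi0 _].
split=> [[_ chi_harm] j x | chi_harm]; first by rewrite -conv_A.
by split=> [_ -> //| j x]; rewrite conv_A.
Qed.

Corollary convF_kernel_span (K : finFieldType) p (pcharKp : p \in [pchar K])
    (L : closedFieldType) (iota : {rmorphism K -> L}) (D : zmodType) (S : D -> Prop) m
    (t : nat) (a : 'I_t -> {fsfun D -> K with 0}) (f : D -> K) :
  is_subgroup S -> has_index S m -> coprime m p -> periodic S f ->
  (forall j x, convF id f (a j) x = 0) <->
  Kspan iota (trace_translates #|K|
    (fun chi => (forall l, S l -> chi l = 1) /\ forall j x, convF iota chi (a j) x = 0))
    (iota \o f).
Proof.
move=> S_subgroup S_index m_coprime f_per; pose A j := [seq (k, a j k) | k <- finsupp (a j)].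
have conv_A h j x : conv_seq iota h (A j) x = convF iota h (a j) x by rewrite /conv_seq big_map.
apply: iff_trans (iff_trans (harmonic_iff_trace_span pcharKp iota A S_subgroup
  S_index m_coprime f_per) _).
  split=> f_harm j x; first by rewrite conv_A -rmorph_convF f_harm rmorph0.
  by apply: (fmorph_inj iota); rewrite rmorph0 rmorph_convF -conv_A.
apply: Kspan_iff => v; apply: trace_translates_iff => chi _.
split=> -[chi_S chi_harm]; split=> // j x; first by rewrite -conv_A.
by rewrite conv_A.
Qed.

Theorem theorem4p4
  (K : finFieldType) (p : nat) (Hp : p \in [pchar K])
  (L : closedFieldType) (iota : {rmorphism K -> L}) (Halg : integralRange iota) :
  (* (a) *)
  (forall (G : finZmodType) (HG : coprime #|G| p)
          (t : nat) (a : 'I_t -> G -> K) (f : G -> K),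
     (forall j x, convG f (a j) x = 0) <->
     Kspan iota
       (trace_translates #|K|
          (fun chi => forall j x, convG chi (iota \o a j) x = 0))
       (iota \o f))
  /\
  (* (b) *)
  (forall (n : nat) (S : 'rV[int]_n -> Prop) (HS : is_subgroup S)
          (m : nat) (Hm : has_index S m) (Hmp : coprime m p)
          (t : nat) (a : 'I_t -> {fsfun 'rV[int]_n -> K with 0})
          (f : 'rV[int]_n -> K)
          (Hf : forall x l, S l -> f (x + l) = f x),
     (forall j x, convF id f (a j) x = 0) <->
     Kspan iota
       (trace_translates #|K|
          (fun chi => (forall l, S l -> chi l = 1) /\
                      forall j x, convF iota chi (a j) x = 0))
       (iota \o f)).
Proof.
split=> [G HG t a f | n S HS m Hm Hmp t a f Hf].
  exact (convG_kernel_span Hp iota a f HG).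
exact (convF_kernel_span Hp iota a HS Hm Hmp Hf).
Qed.
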